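(* Let $z\in(-1,1)$ be real and suppose that $f^{(1)}(L_z)$ and $g^{(1)}(L_z)$ are disjoint. Then there is an open neighbourhood $U$ of $z$ in $\mathbb{C}$ such that $\mathcal{M}\cap U\subseteq\mathbb{R}$.
   Context: For real $z\in(-1,1)$ define affine maps of $\mathbb{R}^2$ by $f^{(1)}(x,y)=(zx,\,x+zy)$ and $g^{(1)}(x,y)=(z(x-1)+1,\,x-1+zy)$, and let $L_z\subseteq\mathbb{R}^2$ be the limit set of the iterated function system $\{f^{(1)},g^{(1)}\}$ (the unique nonempty compact set with $L_z=f^{(1)}(L_z)\cup g^{(1)}(L_z)$). For $w\in\mathbb{D}^*=\{0<|w|<1\}$, let $\Lambda_w$ be the unique nonempty compact subset of $\mathbb{C}$ with $\Lambda_w=\{wx:x\in\Lambda_w\}\cup\{w(x-1)+1:x\in\Lambda_w\}$, and $\mathcal{M}=\{w\in\mathbb{D}^*:\Lambda_w\text{ connected}\}$. *)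

From HB Require Import structures.
From mathcomp Require Import all_boot all_order all_algebra.
From mathcomp Require Import all_classical all_reals all_analysis.
From mathcomp Require Import complex.
Import Order.TTheory GRing.Theory Num.Theory.
Import numFieldNormedType.Exports.
Set Implicit Arguments. Unset Strict Implicit. Unset Printing Implicit Defensive.
Local Open Scope ring_scope.
Local Open Scope classical_set_scope.

(* The complex numbers R[i] carry the metric topology of the modulus |.|. *)
HB.instance Definition _ (R : rcfType) := PseudoPointedMetric.copy R[i] R[i]^o.

Definition f1 (R : realType) (z : R) (p : R * R) : R * R :=
  (z * p.1, p.1 + z * p.2).
Definition g1 (R : realType) (z : R) (p : R * R) : R * R :=
  (z * (p.1 - 1) + 1, p.1 - 1 + z * p.2).

(* L is the limit set of the IFS {f, g}: nonempty compact with L = f(L) u g(L).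
   (Such a set is unique for contracting IFS.) *)
Definition is_limit_set (T : topologicalType) (f g : T -> T) (L : set T) : Prop :=
  L !=set0 /\ compact L /\ L = f @` L `|` g @` L.

Definition phi0 (R : realType) (w : R[i]) (x : R[i]) : R[i] := w * x.
Definition phi1 (R : realType) (w : R[i]) (x : R[i]) : R[i] := w * (x - 1) + 1.

Definition is_Lambda (R : realType) (w : R[i]) (Lam : set R[i]) : Prop :=
  is_limit_set (phi0 w) (phi1 w) Lam.

Definition Mset (R : realType) : set R[i] :=
  [set w | 0 < `|w| < 1 /\ exists Lam, is_Lambda w Lam /\ connected Lam].

From HB Require Import structures.
From mathcomp Require Import all_boot all_order all_algebra.
From mathcomp Require Import all_classical all_reals all_analysis.
From mathcomp Require Import complex ring lra.
Import Order.TTheory GRing.Theory Num.Theory.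
Import numFieldNormedType.Exports.
Local Open Scope ring_scope.
Local Open Scope classical_set_scope.

Set Implicit Arguments.
Unset Strict Implicit.
Unset Printing Implicit Defensive.

(* The maps f^(1), g^(1) are the similarities phi0 x = w x, phi1 x = w (x - 1) + 1
   at w = z together with their derivative in w.  For addresses s, t of equal
   length, phi0 (phi_s 0) - phi1 (phi_t 0) is a polynomial [gap w s t] in w, and
   composing f^(1), g^(1) along s and t from a point of L_z and then applying
   f^(1), resp. g^(1), gives two points whose difference is
   (gap z s t, gap_dd z z s t), with [gap_dd] the divided difference of [gap].
   As f^(1)(L_z) and g^(1)(L_z) are disjoint and compact,
   |gap z s t| + |gap_dd z z s t| >= d > 0 for all s, t.
   If Lambda_w is connected, phi0(Lambda_w) and phi1(Lambda_w) meet, and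
   unfolding a common point gives addresses with |gap w s t| arbitrarily small;
   by symmetry this also holds at the conjugate w^*, so gap_dd w w^* s t is at
   most 2 |gap w s t| / |w - w^*|.  Lipschitz bounds for [gap] and [gap_dd] on a
   disc |u| <= r < 1 then give d <= c |w - z| for every non-real w in M. *)

Section Coding.
Variable T : nzRingType.
Implicit Types (u v : T) (s t : seq bool).

(* [psi u s] is phi_s 0, where phi_s composes phi0 x = u x (bit false) and
   phi1 x = u (x - 1) + 1 (bit true), the head of [s] being applied last;
   [psi_dd u v s] is the divided difference (psi u s - psi v s) / (u - v), and
   [gap u s t] is phi0 (phi_s 0) - phi1 (phi_t 0). *)

Fixpoint psi u s : T :=
  if s is a :: s' then u * psi u s' + a%:R * (1 - u) else 0.

Fixpoint psi_dd u v s : T :=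
  if s is a :: s' then u * psi_dd u v s' + psi v s' - a%:R else 0.

Definition gap u s t : T := u * (psi u s - psi u t) + u - 1.

Definition gap_dd u v s t : T :=
  psi v s - psi v t + u * (psi_dd u v s - psi_dd u v t) + 1.

End Coding.

Section DividedDifferences.
Variable T : comNzRingType.
Implicit Types (u v : T) (s t : seq bool).

Lemma psi_ddE u v s : (u - v) * psi_dd u v s = psi u s - psi v s.
Proof.
elim: s => [|a s IH] /=; first by rewrite mulr0 subrr.
transitivity (u * ((u - v) * psi_dd u v s) + (u - v) * psi v s - (u - v) * a%:R).
  by ring.
by rewrite IH; ring.
Qed.

Lemma gap_ddE u v s t : (u - v) * gap_dd u v s t = gap u s t - gap v s t.
Proof.
transitivity ((u - v) * (psi v s - psi v t)
  + u * ((u - v) * psi_dd u v s - (u - v) * psi_dd u v t) + (u - v)).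
  by rewrite /gap_dd; ring.
by rewrite !psi_ddE /gap; ring.
Qed.

End DividedDifferences.

Section CodingMorphism.
Variables (T T' : nzRingType) (f : {rmorphism T -> T'}).
Implicit Types (u v : T) (s t : seq bool).

Lemma psi_rmorph u s : f (psi u s) = psi (f u) s.
Proof.
elim: s => [|a s IH] /=; first by rewrite rmorph0.
by rewrite rmorphD !rmorphM rmorphB rmorph1 rmorph_nat IH.
Qed.

Lemma psi_dd_rmorph u v s : f (psi_dd u v s) = psi_dd (f u) (f v) s.
Proof.
elim: s => [|a s IH] /=; first by rewrite rmorph0.
by rewrite rmorphB rmorphD rmorphM rmorph_nat IH psi_rmorph.
Qed.

Lemma gap_rmorph u s t : f (gap u s t) = gap (f u) s t.
Proof. by rewrite /gap rmorphB rmorphD rmorphM rmorphB !psi_rmorph rmorph1. Qed.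

Lemma gap_dd_rmorph u v s t : f (gap_dd u v s t) = gap_dd (f u) (f v) s t.
Proof.
by rewrite /gap_dd rmorphD rmorphD rmorphM !rmorphB !psi_rmorph !psi_dd_rmorph rmorph1.
Qed.

End CodingMorphism.

Section Estimates.
Variable T : numDomainType.
Variables r k : T.
(* [k] stands for 1 / (1 - r), the sum of the geometric series of ratio r. *)
Hypotheses (k_ge1 : 1 <= k) (rkE : r * k + 1 = k).
Implicit Types (u v : T) (s t : seq bool).

Let k_ge0 : 0 <= k. Proof. exact: le_trans k_ge1. Qed.

Let rk : r * k = k - 1. Proof. by rewrite -{2}rkE addrK. Qed.

Let r_le1 : r <= 1.
Proof.
have k_gt0 : 0 < k by exact: lt_le_trans k_ge1.
by rewrite -(ler_pM2r k_gt0) mul1r rk gerBl ler01.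
Qed.

Let norm_bool (a : bool) : `|a%:R : T| <= 1.
Proof. by case: a; rewrite ?normr1 ?normr0. Qed.

Let normD3 (x y z : T) : `|x + y + z| <= `|x| + `|y| + `|z|.
Proof. by apply: le_trans (ler_normD _ _) _; rewrite lerD2r ler_normD. Qed.

Lemma norm_psi_le u s : `|u| <= r -> `|psi u s| <= 2 * k.
Proof.
move=> ur; elim: s => [|a s IH] /=; first by rewrite normr0 mulr_ge0.
have norm_1u : `|1 - u| <= 2.
  apply: le_trans (ler_normB _ _) _; rewrite normr1.
  by apply: le_trans (lerD (lexx _) (le_trans ur r_le1)) _.
have -> : 2 * k = r * (2 * k) + 1 * 2 by rewrite -{1}rkE; ring.
apply: le_trans (ler_normD _ _) _; rewrite !normrM.
by apply: lerD; apply: ler_pM.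
Qed.

Lemma norm_psi_dd_le u v s :
  `|u| <= r -> `|v| <= r -> `|psi_dd u v s| <= 3 * k ^+ 2.
Proof.
move=> ur vr; elim: s => [|a s IH] /=; first by rewrite normr0 mulr_ge0 ?exprn_ge0.
apply: le_trans (ler_normB _ _) _; rewrite -[leRHS](subrK 1).
apply: lerD (norm_bool a); apply: le_trans (ler_normD _ _) _.
apply: (@le_trans _ _ (r * (3 * k ^+ 2) + 2 * k)).
  by rewrite normrM; apply: lerD; [apply: ler_pM | exact: norm_psi_le].
have -> : r * (3 * k ^+ 2) + 2 * k = 3 * k ^+ 2 - 1 - (k - 1).
  by transitivity (3 * k * (r * k) + 2 * k); [ring | rewrite rk; ring].
by rewrite gerBl subr_ge0.
Qed.

Lemma psi_lipschitz u v s :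
  `|u| <= r -> `|v| <= r -> `|psi u s - psi v s| <= 3 * k ^+ 2 * `|u - v|.
Proof.
move=> ur vr; rewrite -psi_ddE normrM mulrC.
by apply: ler_wpM2r => //; exact: norm_psi_dd_le.
Qed.

Lemma psi_dd_lipschitz (u v u' v' : T) s :
  `|u| <= r -> `|v| <= r -> `|u'| <= r -> `|v'| <= r ->
  `|psi_dd u v s - psi_dd u' v' s| <= 6 * k ^+ 3 * (`|u - u'| + `|v - v'|).
Proof.
move=> ur vr u'r v'r; set E := `|u - u'| + `|v - v'|.
have uE : `|u - u'| <= E by rewrite lerDl.
have vE : `|v - v'| <= E by rewrite lerDr.
elim: s => [|a s IH] /=; first by rewrite subrr normr0 !mulr_ge0 ?exprn_ge0 ?addr_ge0.
have -> : u * psi_dd u v s + psi v s - a%:R - (u' * psi_dd u' v' s + psi v' s - a%:R)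
    = u * (psi_dd u v s - psi_dd u' v' s) + (u - u') * psi_dd u' v' s
      + (psi v s - psi v' s) by ring.
have -> : 6 * k ^+ 3 * E = r * (6 * k ^+ 3 * E) + E * (3 * k ^+ 2) + 3 * k ^+ 2 * E.
  by transitivity (6 * k ^+ 2 * E * (r * k) + 6 * k ^+ 2 * E); [rewrite rk | ]; ring.
apply: le_trans (normD3 _ _ _) _; rewrite !normrM.
apply: lerD; first by apply: lerD; apply: ler_pM => //; exact: norm_psi_dd_le.
apply: le_trans (psi_lipschitz s vr v'r) _.
by apply: ler_wpM2l vE; rewrite mulr_ge0 ?exprn_ge0.
Qed.

Lemma norm_gap_dd_le u v s t :
  `|u| <= r -> `|v| <= r -> `|gap_dd u v s t| <= 6 * k ^+ 2.
Proof.
move=> ur vr; apply: le_trans (normD3 _ _ _) _; rewrite normr1 normrM.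
apply: (@le_trans _ _ (4 * k + r * (6 * k ^+ 2) + 1)).
  apply: lerD => //; apply: lerD.
    by apply: le_trans (ler_normB _ _) _; rewrite (_ : 4 * k = 2 * k + 2 * k);
      [apply: lerD; exact: norm_psi_le | ring].
  apply: ler_pM => //; apply: le_trans (ler_normB _ _) _.
  by rewrite (_ : 6 * k ^+ 2 = 3 * k ^+ 2 + 3 * k ^+ 2); [apply: lerD; exact: norm_psi_dd_le | ring].
have -> : 4 * k + r * (6 * k ^+ 2) + 1 = 6 * k ^+ 2 - (2 * k - 1).
  by transitivity (4 * k + 6 * k * (r * k) + 1); [ring | rewrite rk; ring].
by rewrite gerBl subr_ge0 (le_trans k_ge1) // ler_peMl // ler1n.
Qed.

Lemma gap_lipschitz u v s t :
  `|u| <= r -> `|v| <= r -> `|gap u s t - gap v s t| <= 6 * k ^+ 2 * `|u - v|.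
Proof.
move=> ur vr; rewrite -gap_ddE normrM mulrC.
by apply: ler_wpM2r => //; exact: norm_gap_dd_le.
Qed.

Lemma gap_dd_lipschitz (u v u' v' : T) s t :
  `|u| <= r -> `|v| <= r -> `|u'| <= r -> `|v'| <= r ->
  `|gap_dd u v s t - gap_dd u' v' s t| <= 12 * k ^+ 3 * (`|u - u'| + `|v - v'|).
Proof.
move=> ur vr u'r v'r; set E := `|u - u'| + `|v - v'|.
have uE : `|u - u'| <= E by rewrite lerDl.
have vE : `|v - v'| <= E by rewrite lerDr.
have -> : gap_dd u v s t - gap_dd u' v' s t
    = ((psi v s - psi v' s) - (psi v t - psi v' t))
      + (u - u') * (psi_dd u' v' s - psi_dd u' v' t)
      + u * ((psi_dd u v s - psi_dd u' v' s) - (psi_dd u v t - psi_dd u' v' t)).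
  by rewrite /gap_dd; ring.
have -> : 12 * k ^+ 3 * E = 6 * k ^+ 2 * E + E * (6 * k ^+ 2) + r * (12 * k ^+ 3 * E).
  by transitivity (12 * k ^+ 2 * E * (r * k) + 12 * k ^+ 2 * E); [rewrite rk | ]; ring.
apply: le_trans (normD3 _ _ _) _; rewrite !normrM.
apply: lerD; first apply: lerD.
- apply: le_trans (ler_normB _ _) _.
  rewrite (_ : 6 * k ^+ 2 * E = 3 * k ^+ 2 * E + 3 * k ^+ 2 * E); last by ring.
  apply: lerD; [apply: le_trans (psi_lipschitz s vr v'r) _
               | apply: le_trans (psi_lipschitz t vr v'r) _];
    by apply: ler_wpM2l vE; rewrite mulr_ge0 ?exprn_ge0.
- apply: ler_pM => //; apply: le_trans (ler_normB _ _) _.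
  rewrite (_ : 6 * k ^+ 2 = 3 * k ^+ 2 + 3 * k ^+ 2); last by ring.
  by apply: lerD; exact: norm_psi_dd_le.
- apply: ler_pM => //; apply: le_trans (ler_normB _ _) _.
  rewrite (_ : 12 * k ^+ 3 * E = 6 * k ^+ 3 * E + 6 * k ^+ 3 * E); last by ring.
  by apply: lerD; exact: psi_dd_lipschitz.
Qed.

End Estimates.

Section NonRealParameter.
Variable C : numClosedFieldType.
Variables r k : C.
Hypotheses (k_ge1 : 1 <= k) (rkE : r * k + 1 = k).

Lemma gap_conj_bound (z w : C) s t :
  z \is Num.real -> `|z| <= r -> `|w| <= r ->
  `|w - w^*| * (`|gap z s t| + `|gap_dd z z s t|)
    <= (`|w - w^*| + 2) * `|gap w s t|
       + `|w - w^*| * ((6 * k ^+ 2 + 24 * k ^+ 3) * `|w - z|).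
Proof.
move=> zR zr wr; set D := `|w - w^*|; set dist := `|w - z|.
have wJr : `|w^*| <= r by rewrite norm_conjC.
have distJ : `|w^* - z| = dist by rewrite -(conj_Creal zR) -rmorphB norm_conjC.
have gapJ : `|gap w^* s t| = `|gap w s t| by rewrite -(gap_rmorph Num.conj) norm_conjC.
have Gz : `|gap z s t| <= `|gap w s t| + 6 * k ^+ 2 * dist.
  rewrite -[gap z s t](subrK (gap w s t)) addrC; apply: le_trans (ler_normD _ _) _.
  by rewrite lerD2l /dist (distrC w); exact: (gap_lipschitz k_ge1 rkE).
have Hz : `|gap_dd z z s t| <= `|gap_dd w w^* s t| + 12 * k ^+ 3 * (dist + dist).
  rewrite -[gap_dd z z s t](subrK (gap_dd w w^* s t)) addrC.
  apply: le_trans (ler_normD _ _) _.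
  by rewrite lerD2l -{2}distJ /dist !(distrC _ z); exact: (gap_dd_lipschitz k_ge1 rkE).
have HJ : D * `|gap_dd w w^* s t| <= `|gap w s t| *+ 2.
  by rewrite -normrM gap_ddE mulr2n -{2}gapJ ler_normB.
apply: le_trans (ler_wpM2l (normr_ge0 _) (lerD Gz Hz)) _; rewrite -/D.
rewrite [X in X <= _](_ : _ = D * `|gap w s t| + D * `|gap_dd w w^* s t|
                             + D * ((6 * k ^+ 2 + 24 * k ^+ 3) * dist)); last by ring.
rewrite [X in _ <= X](_ : _ = D * `|gap w s t| + `|gap w s t| *+ 2
                             + D * ((6 * k ^+ 2 + 24 * k ^+ 3) * dist)); last first.
  by rewrite mulr2n; ring.
by rewrite lerD2r lerD2l.
Qed.

Lemma nonreal_gap_far (z w d : C) :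
  z \is Num.real -> `|z| <= r -> `|w| <= r -> w \isn't Num.real ->
  (forall s t, size s = size t -> d <= `|gap z s t| + `|gap_dd z z s t|) ->
  (forall e, 0 < e -> exists s t, size s = size t /\ `|gap w s t| < e) ->
  d <= (6 * k ^+ 2 + 24 * k ^+ 3) * `|w - z|.
Proof.
move=> zR zr wr wNR sep small; set c := _ + _; set D := `|w - w^*|.
have D_gt0 : 0 < D by rewrite normr_gt0 subr_eq0 eq_sym -CrealE.
have dR : d \is Num.real.
  by rewrite (ler_real (sep [::] [::] erefl)) realD ?normr_real.
have cR : c \is Num.real by rewrite realD // realM // realX // ger1_real.
rewrite real_leNgt ?realM ?normr_real //; apply/negP => cd.
have [s [t [st small_st]]] : exists s t, size s = size t /\
    `|gap w s t| < D * (d - c * `|w - z|) / (D + 2).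
  by apply: small; rewrite !divr_gt0 ?mulr_gt0 ?subr_gt0 ?addr_gt0.
suff : D * d < D * d by rewrite ltxx.
apply: le_lt_trans (ler_wpM2l (ltW D_gt0) (sep s t st)) _.
apply: le_lt_trans (gap_conj_bound _ _ zR zr wr) _.
rewrite -[ltRHS](subrK (D * (c * `|w - z|))) -mulrBr ltrD2r mulrC.
by rewrite -ltr_pdivlMr ?addr_gt0.
Qed.

End NonRealParameter.

Definition iter_ifs (T : Type) (f g : T -> T) (s : seq bool) (x : T) : T :=
  foldr (fun (a : bool) y => if a then g y else f y) x s.

Section LimitSets.
Variables (T : topologicalType) (f g : T -> T) (L : set T).
Hypothesis L_limit : is_limit_set f g L.

Lemma limit_set_iter s x : L x -> L (iter_ifs f g s x).
Proof.
have [_ [_ eqL]] := L_limit; move=> Lx.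
by elim: s => [|a s IH] //=; rewrite eqL; case: a; [right | left];
  exists (iter_ifs f g s x).
Qed.

Lemma limit_set_unfold n x :
  L x -> exists s y, [/\ size s = n, L y & x = iter_ifs f g s y].
Proof.
have [_ [_ eqL]] := L_limit; elim: n x => [|n IH] x Lx; first by exists [::], x.
move: Lx; rewrite {1}eqL => -[] [x1 /IH [s [y [sn Ly ->]]] <-].
- by exists (false :: s), y; rewrite /= sn.
- by exists (true :: s), y; rewrite /= sn.
Qed.

Lemma connected_limit_set_meet :
  hausdorff_space T -> continuous f -> continuous g -> connected L ->
  f @` L `&` g @` L !=set0.
Proof.
move=> hT cf cg conL; have [[x0 Lx0] [cL eqL]] := L_limit.
have closed_image (h : T -> T) : continuous h -> closed (h @` L).
  move=> ch; apply: compact_closed => //.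
  by apply: continuous_compact => //; exact: continuous_subspaceT.
apply/set0P/negP => /eqP disj.
have fL_L : f @` L = L.
  apply: conL; first by exists (f x0), x0.
  - exists (~` (g @` L)); first exact/closed_openC/closed_image.
    apply/seteqP; split => [u fLu | u [Lu gLu]].
      split; first by rewrite eqL; left.
      by move=> gLu; have : (f @` L `&` g @` L) u by []; rewrite disj.
    by move: Lu; rewrite {1}eqL => -[// | /gLu].
  - exists (f @` L); first exact: closed_image.
    by apply/seteqP; split => [u fLu | u []//]; split => //; rewrite eqL; left.
have : (f @` L `&` g @` L) (g x0) by split; [rewrite fL_L eqL; right|]; exists x0.
by rewrite disj.
Qed.

End LimitSets.

Section RealModel.
Variable R : realType.
Implicit Types (z : R) (p : R * R) (s t : seq bool).

Let subr_pair (a b c d : R) : (a, b) - (c, d) = (a - c, b - d). Proof. by []. Qed.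

Lemma f1_continuous z : continuous (f1 z).
Proof.
move=> p; apply: (@cvg_pair _ R R (nbhs p) (nbhs _) (nbhs _)).
  by apply: cvgMl_tmp; exact: cvg_fst.
by apply: cvgD; [exact: cvg_fst | apply: cvgMl_tmp; exact: cvg_snd].
Qed.

Lemma g1_continuous z : continuous (g1 z).
Proof.
move=> p; apply: (@cvg_pair _ R R (nbhs p) (nbhs _) (nbhs _)).
  apply: cvgD; last exact: cvg_cst.
  by apply: cvgMl_tmp; apply: cvgB; [exact: cvg_fst | exact: cvg_cst].
apply: cvgD; first by apply: cvgB; [exact: cvg_fst | exact: cvg_cst].
by apply: cvgMl_tmp; exact: cvg_snd.
Qed.

Lemma iter_f1g1_sub z p s t : size s = size t ->
  iter_ifs (f1 z) (g1 z) s p - iter_ifs (f1 z) (g1 z) t p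
  = (psi z s - psi z t, psi_dd z z s - psi_dd z z t).
Proof.
elim: s t => [|a s IH] [|b t] //=; first by rewrite !subrr.
move=> /succn_inj /IH; set P := iter_ifs _ _ s p; set Q := iter_ifs _ _ t p.
move=> [/eqP + /eqP]; rewrite !subr_eq => /eqP P1 /eqP P2.
by case: a; case: b; rewrite /f1 /g1 /= P1 P2 subr_pair; congr pair; ring.
Qed.

Lemma f1_sub_g1_iter z p s t : size s = size t ->
  f1 z (iter_ifs (f1 z) (g1 z) s p) - g1 z (iter_ifs (f1 z) (g1 z) t p)
  = (gap z s t, gap_dd z z s t).
Proof.
move=> /(iter_f1g1_sub z p); set P := iter_ifs _ _ s p; set Q := iter_ifs _ _ t p.
move=> [/eqP + /eqP]; rewrite !subr_eq => /eqP P1 /eqP P2.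
by rewrite /f1 /g1 /gap /gap_dd /= P1 P2 subr_pair; congr pair; ring.
Qed.

Lemma limit_set_separation z L :
  is_limit_set (f1 z) (g1 z) L -> f1 z @` L `&` g1 z @` L = set0 ->
  exists2 d : R, 0 < d &
    forall s t, size s = size t -> d <= `|gap z s t| + `|gap_dd z z s t|.
Proof.
move=> L_limit disj; have [[p0 Lp0] [cL _]] := L_limit.
pose h (pq : (R * R) * (R * R)) := `|f1 z pq.1 - g1 z pq.2|.
have h_cont : continuous h.
  move=> pq; apply: cvg_norm; apply: cvgB; apply: continuous_comp;
    [exact: cvg_fst | exact: f1_continuous | exact: cvg_snd | exact: g1_continuous].
have LL0 : (L `*` L) !=set0 by exists (p0, p0).
have [[p q] /set_mem [/= Lp Lq] h_min] :=
  compact_EVT_min LL0 (compact_setX cL cL) (continuous_subspaceT h_cont).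
exists (h (p, q)).
  rewrite normr_gt0 subr_eq0; apply/negP => /eqP fpq.
  have : (f1 z @` L `&` g1 z @` L) (f1 z p) by split; [exists p | exists q].
  by rewrite disj.
move=> s t st; have := h_min (iter_ifs (f1 z) (g1 z) s p0, iter_ifs (f1 z) (g1 z) t p0).
rewrite /h /= f1_sub_g1_iter // => /(_ _)/le_trans; apply.
  by apply/mem_set; split; exact: limit_set_iter.
by rewrite ge_max lerDl lerDr !normr_ge0.
Qed.

End RealModel.

Section ComplexModel.
Variable R : realType.
Local Open Scope complex_scope.
Implicit Types (w x y : R[i]) (s t : seq bool).

Lemma phi0_continuous w : continuous (phi0 w).
Proof. by move=> x; apply: (@cvgMl_tmp _ _ _ (nbhs_filter x)); exact: cvg_id. Qed.

Lemma phi1_continuous w : continuous (phi1 w).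
Proof.
move=> x; have Fx := nbhs_filter x.
apply: (@cvgD _ R[i]^o _ _ Fx); last exact: cvg_cst.
apply: (@cvgMl_tmp _ _ _ Fx).
by apply: (@cvgD _ R[i]^o _ _ Fx); [exact: cvg_id | exact: cvg_cst].
Qed.

Lemma iter_phiE w s x : iter_ifs (phi0 w) (phi1 w) s x = w ^+ size s * x + psi w s.
Proof.
elim: s => [|a s IH] /=; first by rewrite mul1r addr0.
by rewrite IH exprS; case: a; rewrite /phi0 /phi1 /=; ring.
Qed.

Lemma phi0_phi1_iter w s t x y : size s = size t ->
  phi0 w (iter_ifs (phi0 w) (phi1 w) s x) - phi1 w (iter_ifs (phi0 w) (phi1 w) t y)
  = gap w s t + w ^+ (size s).+1 * (x - y).
Proof. by move=> st; rewrite !iter_phiE -st /phi0 /phi1 /gap exprS; ring. Qed.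

Lemma norm_real_complex (a : R) : `|a%:C| = `|a|%:C.
Proof. by rewrite normc_def /= expr0n addr0 sqrtr_sqr. Qed.

Lemma Re_norm_continuous : continuous (fun x : R[i] => complex.Re `|x|).
Proof.
move=> x; have Fx := nbhs_filter x.
apply/(@cvgrPdist_lt _ _ _ _ Fx) => e e_gt0.
apply/nbhs_ballP; exists e%:C; first by rewrite /= ltcR.
move=> y /= xy; rewrite -ltcR; apply: le_lt_trans xy.
by rewrite -norm_real_complex rmorphB; exact: (ler_dist_dist x y).
Qed.

Lemma compact_norm_bounded (A : set R[i]) :
  compact A -> exists M : R, forall x, A x -> `|x| <= M%:C.
Proof.
move=> cA; have /compact_bounded [M [_ MA]] : compact ((fun x => complex.Re `|x|) @` A).
  by apply: continuous_compact => //; exact/continuous_subspaceT/Re_norm_continuous.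
exists (M + 1) => x Ax; rewrite [`|x|]/((complex.Re `|x|)%:C) lecR.
by apply: le_trans (ler_norm _) _; apply: (MA (M + 1)); [rewrite ltrDl | exists x].
Qed.

Lemma exists_norm_expr_lt w (e : R[i]) : `|w| < 1 -> 0 < e -> exists n, `|w| ^+ n < e.
Proof.
move=> w_lt1 e_gt0.
have [q q_def] : exists q : R, `|w| = q%:C by exists (complex.Re `|w|).
have [e' e_def] : exists e' : R, e = e'%:C.
  by exists (complex.Re e); rewrite RRe_real // gtr0_real.
rewrite q_def ltcR in w_lt1; rewrite e_def ltcR in e_gt0.
have q_ge0 : 0 <= q by rewrite -ler0c -q_def.
have q_lt1 : `|q| < 1 by rewrite ger0_norm.
have /cvgrPdist_lt /(_ _ e_gt0) [N _ qN] := cvg_expr q_lt1.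
exists N; rewrite q_def e_def -rmorphXn ltcR.
by have := qN N (leqnn N); rewrite sub0r normrN ger0_norm ?exprn_ge0.
Qed.

Lemma connected_Lambda_small_gap w Lam :
  `|w| < 1 -> is_Lambda w Lam -> connected Lam ->
  forall e, 0 < e -> exists s t, size s = size t /\ `|gap w s t| < e.
Proof.
move=> w_lt1 Lam_limit conL e e_gt0.
have [_ [[x Lx <-] [y Ly xy]]] :=
  connected_limit_set_meet Lam_limit (@norm_hausdorff _ R[i]^o)
    (@phi0_continuous w) (@phi1_continuous w) conL.
have [M LamM] := compact_norm_bounded Lam_limit.2.1.
pose B := M%:C *+ 2 + 1.
have B_gt0 : 0 < B by rewrite ltr_wpDl // mulrn_wge0 // (le_trans _ (LamM x Lx)).
have [n wn] := exists_norm_expr_lt w_lt1 (divr_gt0 e_gt0 B_gt0).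
have [s [x' [sn Lx' x_def]]] := limit_set_unfold Lam_limit n Lx.
have [t [y' [tn Ly' y_def]]] := limit_set_unfold Lam_limit n Ly.
exists s, t; have st : size s = size t by rewrite sn tn.
split => //; have := phi0_phi1_iter w x' y' st.
rewrite -x_def -y_def -xy subrr sn => /esym/eqP; rewrite addr_eq0 => /eqP ->.
rewrite normrN normrM normrX; apply: le_lt_trans (_ : `|w| ^+ n * B < e); last first.
  by rewrite -ltr_pdivlMr.
apply: ler_pM; rewrite ?exprn_ge0 //.
  by rewrite exprS ler_piMl ?exprn_ge0 // ltW.
apply: le_trans (ler_normB _ _) _; apply: (@le_trans _ _ (M%:C *+ 2)).
  by rewrite mulr2n; apply: lerD; exact: LamM.
by rewrite lerDl ler01.
Qed.

Lemma Mset_nonreal_far (r k d z : R) w :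
  1 <= k -> r * k + 1 = k -> `|z| <= r ->
  (forall s t, size s = size t -> d <= `|gap z s t| + `|gap_dd z z s t|) ->
  Mset w -> `|w| <= r%:C -> w \isn't Num.real ->
  d%:C <= (6 * k ^+ 2 + 24 * k ^+ 3)%:C * `|w - z%:C|.
Proof.
move=> k_ge1 rkE zr sep [/andP[_ w_lt1] [Lam [Lam_limit conL]]] wr wNR.
have zR : z%:C \is Num.real by apply/complex_realP; exists z.
have zCr : `|z%:C| <= r%:C by rewrite norm_real_complex lecR.
have kC_ge1 : 1 <= k%:C by rewrite -(rmorph1 (real_complex R)) lecR.
have rkC : r%:C * k%:C + 1 = k%:C.
  by rewrite -rmorphM -(rmorph1 (real_complex R)) -rmorphD rkE.
have sepC s t : size s = size t ->
    d%:C <= `|gap z%:C s t| + `|gap_dd z%:C z%:C s t|.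
  rewrite -(gap_rmorph (real_complex R)) -(gap_dd_rmorph (real_complex R)).
  by rewrite !norm_real_complex -rmorphD lecR; exact: sep.
have -> : (6 * k ^+ 2 + 24 * k ^+ 3)%:C = 6 * k%:C ^+ 2 + 24 * k%:C ^+ 3.
  by rewrite rmorphD !rmorphM !rmorph_nat; ring.
exact: (nonreal_gap_far kC_ge1 rkC zR zCr wr wNR sepC
          (connected_Lambda_small_gap w_lt1 Lam_limit conL)).
Qed.

End ComplexModel.

Local Open Scope complex_scope.

Theorem lemma10p2p1 (R : realType) (z : R) (L : set (R * R)) :
  -1 < z < 1 ->
  is_limit_set (f1 z) (g1 z) L ->
  f1 z @` L `&` g1 z @` L = set0 ->
  exists U : set R[i],
    open U /\ U (z%:C)%C /\
    @Mset R `&` U `<=` [set w | exists r : R, w = (r%:C)%C].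
Proof.
move=> /andP[z_gtN1 z_lt1] L_limit disj.
have [d d_gt0 sep] := limit_set_separation L_limit disj.
have norm_z_lt1 : `|z| < 1 by rewrite ltr_norml z_gtN1.
pose r := (1 + `|z|) / 2; pose k := (1 - r)^-1; pose c := 6 * k ^+ 2 + 24 * k ^+ 3.
have zr : `|z| < r by rewrite /r; lra.
have r_lt1 : 0 < 1 - r by rewrite /r; lra.
have k_ge1 : 1 <= k by rewrite invf_ge1 // gerBl /r; have := normr_ge0 z; lra.
have rkE : r * k + 1 = k by rewrite /k; field; rewrite lt0r_neq0.
have c_gt0 : 0 < c by rewrite addr_gt0 // mulr_gt0 // exprn_gt0 // (lt_le_trans ltr01).
pose rho := Num.min (r - `|z|) (d / c).
exists (ball (z%:C)%C (rho%:C)%C); split; first exact: ball_open.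
split; first by apply: ballxx; rewrite ltcR lt_min subr_gt0 zr divr_gt0.
move=> w [Mw zw]; apply: contrapT => /complex_realP wNR.
have dist_lt : `|w - z%:C| < rho%:C by rewrite distrC.
have wr : `|w| <= r%:C.
  rewrite -(subrK z%:C w); apply: le_trans (ler_normD _ _) _.
  apply: le_trans (lerD (ltW dist_lt) (lexx _)) _.
  by rewrite norm_real_complex -rmorphD lecR -lerBrDr /rho ge_min lexx.
move: (Mset_nonreal_far k_ge1 rkE (ltW zr) sep Mw wr wNR); rewrite -/c => d_le.
suff : d%:C < d%:C by rewrite ltxx.
apply: le_lt_trans d_le (lt_le_trans (_ : _ < c%:C * rho%:C) _).
  by rewrite ltr_pM2l // ltcR.
by rewrite -rmorphM lecR mulrC -ler_pdivlMr // /rho ge_min lexx orbT.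
Qed.
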